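(* Let $H\subset S_n$ be a permutation group, let $A\trianglelefteq\mathbb{Z}_2^{*n}$ be an $H$-invariant normal subgroup, and let $\Gamma=\mathbb{Z}_2^{*n}/A$. Let $u$ be the fundamental representation of the quantum group $\mathbb{G}=\hat\Gamma\rtimes H$. Then for all $k,l\in\mathbb{N}_0$, $$\mathrm{Mor}(u^{\otimes k},u^{\otimes l})=\mathrm{span}\{\hat T^{\mathbf{a}\mathbf{b}}_H\mid[\mathbf{a},\mathbf{b}]\in W_H(k,l)\text{ such that }g_{\mathbf{a}\mathbf{b}^*}\in A\},$$ and the family $\{\hat T^{\mathbf{a}\mathbf{b}}_H\}_{[\mathbf{a},\mathbf{b}]\in W_H(k,l)}$ (one map per class) is linearly independent.
   Context: $\mathbb{Z}_2^{*n}$ is the group generated by $1,\dots,n$ subject to $i^2=e$; $S_n$ acts on it by permuting generators, and $A$ is $H$-invariant if $\sigma(A)=A$ for all $\sigma\in H$. For a tuple $\mathbf{a}=(a_1,\dots,a_k)$ over $\{1,\dots,n\}$, $\mathbf{a}^*$ is the reversed tuple, $\mathbf{a}\mathbf{b}^*$ denotes concatenation, and $g_{\mathbf{c}}=c_1c_2\cdots$ is the corresponding group element (so $g_{\mathbf{a}\mathbf{b}^*}=g_{\mathbf{a}}g_{\mathbf{b}}^{-1}$). Quantum groups: an orthogonal compact matrix quantum group is $(O(\mathbb{G}),u)$ with $O(\mathbb{G})$ a $*$-algebra generated by entries of $u\in M_n(O(\mathbb{G}))$, $u_{ij}=u_{ij}^*$, $uu^t=u^tu=1$, and $u_{ij}\mapsto\sum_k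 u_{ik}\otimes u_{kj}$ extending to a $*$-homomorphism; $\mathrm{Mor}(u^{\otimes k},u^{\otimes l})=\{T\colon(\mathbb{C}^n)^{\otimes k}\to(\mathbb{C}^n)^{\otimes l}\mid Tu^{\otimes k}=u^{\otimes l}T\}$. $H$ is the quantum group $(O(H),v)$ with $v_{ij}(\sigma)=\delta_{i\sigma(j)}$. With $\gamma_i\in\mathbb{C}\Gamma$ the image of the generator $i$, $\hat\Gamma\rtimes H$ is the quantum group $(\mathbb{C}\Gamma\otimes O(H),u)$ with $u_{ij}=\gamma_i\otimes v_{ij}$. $W_H(k,l)$ is the set of orbits $[\mathbf{a},\mathbf{b}]$ of pairs $(\mathbf{a},\mathbf{b})\in\{1,\dots,n\}^k\times\{1,\dots,n\}^l$ under the diagonal action of $H$. $\hat T^{\mathbf{a}\mathbf{b}}_H\colon(\mathbb{C}^n)^{\otimes k}\to(\mathbb{C}^n)^{\otimes l}$ is the linear map with entries $[\hat T^{\mathbf{a}\mathbf{b}}_H]_{\mathbf{j}\mathbf{i}}=\#\{\phi\in H\mid\phi(\mathbf{a})=\mathbf{i},\phi(\mathbf{b})=\mathbf{j}\}$ (coefficient of $e_{j_1}\otimes\cdots\otimes e_{j_l}$ in the image of $e_{i_1}\otimes\cdots\otimes e_{i_k}$); it depends only on $[\mathbf{a},\mathbf{b}]$, and the condition $g_{\mathbf{a}\mathbf{b}^*}\in A$ depends only on the class since $A$ is $H$-invariant. *)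

From HB Require Import structures.
From mathcomp Require Import all_boot all_order all_algebra all_fingroup.
From mathcomp Require Import Rstruct complex.
Set Implicit Arguments. Unset Strict Implicit. Unset Printing Implicit Defensive.
Import Order.TTheory GRing.Theory Num.Theory.
Local Open Scope ring_scope.

Definition Cplx : numClosedFieldType := complex Rdefinitions.R.

Section Defs.
Variable n : nat.

(* A word over the generators {1..n} (here 'I_n) represents an element of
   Z_2^{*n}; the element g_c = c_1 c_2 ... of a tuple c is the word c. *)
Definition word := seq 'I_n.

(* free reduction using i^2 = e *)
Definition push (x : 'I_n) (s : word) : word :=
  if s is y :: s' then (if x == y then s' else x :: s) else [:: x].
Definition red (w : word) : word := foldr push [::] w.

(* A subset of Z_2^{*n} is given by a predicate on reduced words;
   membership of the element represented by an arbitrary word w: *)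
Definition memZ (A : pred word) (w : word) : bool := A (red w).

(* A is a normal subgroup of Z_2^{*n}; the inverse of the element of
   the word x is the element of the word rev x. *)
Definition normal_subgroup (A : pred word) : Prop :=
  [/\ memZ A [::],
      (forall x y, memZ A x -> memZ A y -> memZ A (x ++ y)),
      (forall x, memZ A x -> memZ A (rev x)) &
      (forall x y, memZ A y -> memZ A (x ++ y ++ rev x))].

Definition act (s : {perm 'I_n}) (w : word) : word := map s w.

Definition H_invariant (H : {set {perm 'I_n}}) (A : pred word) : Prop :=
  forall s, s \in H -> forall w, memZ A (act s w) = memZ A w.

(* An element of C Gamma is represented by a finite formal linear combination
   sum_t c_t [w_t] of (images of) elements of Z_2^{*n}. *)
Definition CG := seq (Cplx * word).

Definition cg_zero : CG := [::].
Definition cg_one : CG := [:: (1, [::])].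
Definition cg_gen (i : 'I_n) : CG := [:: (1, [:: i])].
Definition cg_add (x y : CG) : CG := x ++ y.
Definition cg_sum (xs : seq CG) : CG := flatten xs.
Definition cg_scale (c : Cplx) (x : CG) : CG := [seq (c * t.1, t.2) | t <- x].
Definition cg_mul (x y : CG) : CG :=
  [seq (t.1 * t'.1, t.2 ++ t'.2) | t <- x, t' <- y].

(* the coefficient of the coset gA (g represented by the word w) *)
Definition cg_coef (A : pred word) (x : CG) (w : word) : Cplx :=
  \sum_(t <- x | memZ A (t.2 ++ rev w)) t.1.

Definition cg_eq (A : pred word) (x y : CG) : Prop :=
  forall w, cg_coef A x w = cg_coef A y w.

(* ---------- O(G) = C Gamma (x) O(H) = functions H -> C Gamma ---------- *)
Definition OG := {perm 'I_n} -> CG.   (* only the values on H matter *)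
Definition og_eq (H : {set {perm 'I_n}}) (A : pred word) (f g : OG) : Prop :=
  forall s, s \in H -> cg_eq A (f s) (g s).

(* v_ij(sigma) = delta_{i, sigma(j)} and u_ij = gamma_i (x) v_ij *)
Definition u_ (i j : 'I_n) : OG :=
  fun s => if i == s j then cg_gen i else cg_zero.

Definition utens (k : nat) (j i : k.-tuple 'I_n) : OG :=
  fun s => foldr (fun p acc => cg_mul (u_ p.1 p.2 s) acc) cg_one (zip j i).

(* linear maps (C^n)^{(x)k} -> (C^n)^{(x)l} as matrices:
   T (j, i) = coefficient of e_j in T e_i *)
Definition Lin (k l : nat) := {ffun (l.-tuple 'I_n * k.-tuple 'I_n) -> Cplx^o}.

Definition Tu (k l : nat) (T : Lin k l) (j : l.-tuple 'I_n) (i : k.-tuple 'I_n) : OG :=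
  fun s => cg_sum [seq cg_scale (T (j, p)) (utens p i s) | p <- enum {: k.-tuple 'I_n}].
Definition uT (k l : nat) (T : Lin k l) (j : l.-tuple 'I_n) (i : k.-tuple 'I_n) : OG :=
  fun s => cg_sum [seq cg_scale (T (q, i)) (utens j q s) | q <- enum {: l.-tuple 'I_n}].

Definition Mor (H : {set {perm 'I_n}}) (A : pred word) (k l : nat) (T : Lin k l) : Prop :=
  forall j i, og_eq H A (Tu T j i) (uT T j i).

Definition tact (m : nat) (s : {perm 'I_n}) (a : m.-tuple 'I_n) : m.-tuple 'I_n :=
  [tuple of map s a].

Definition orbitH (H : {set {perm 'I_n}}) (k l : nat)
    (p : k.-tuple 'I_n * l.-tuple 'I_n) : {set k.-tuple 'I_n * l.-tuple 'I_n} :=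
  [set (tact s p.1, tact s p.2) | s in H].

Definition W (H : {set {perm 'I_n}}) (k l : nat) : {set {set k.-tuple 'I_n * l.-tuple 'I_n}} :=
  [set orbitH H p | p in [set: k.-tuple 'I_n * l.-tuple 'I_n]].

Definition That (H : {set {perm 'I_n}}) (k l : nat)
    (p : k.-tuple 'I_n * l.-tuple 'I_n) : Lin k l :=
  [ffun ji => (#|[set s in H | (tact s p.1 == ji.2) && (tact s p.2 == ji.1)]|)%:R].

Definition ThatW (H : {set {perm 'I_n}}) (k l : nat)
    (X : {set k.-tuple 'I_n * l.-tuple 'I_n}) : Lin k l :=
  if [pick p in X] is Some p then That H p else 0.

Definition classInA (A : pred word) (k l : nat)
    (X : {set k.-tuple 'I_n * l.-tuple 'I_n}) : bool :=
  if [pick p in X] is Some p then memZ A (val p.1 ++ rev (val p.2)) else false.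

End Defs.

From Pilot Require Import Defs.
From mathcomp Require Import all_boot all_order all_algebra all_fingroup.
Set Implicit Arguments. Unset Strict Implicit. Unset Printing Implicit Defensive.
Import GRing.Theory Num.Theory.
Local Open Scope ring_scope.

(** Evaluated at a permutation s in H, the entries of the tensor power are
    u^{(x)k}_{j,i}(s) = [j = s(i)] g_j.  Comparing the coefficients of every
    coset of A in T u^{(x)k} = u^{(x)l} T shows that T is a morphism iff it is
    H-invariant (T_{s(j),s(i)} = T_{j,i}) and vanishes at (j,i) unless
    g_{i j^*} lies in A.  The H-invariant maps have the basis hat T^{ab}_H,
    one per orbit [a,b], since hat T^{ab}_H is supported exactly on the orbit
    of (b,a); the vanishing condition keeps the orbits with g_{a b^*} in A, a
    condition that is constant on orbits because A is H-invariant. *)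

Section FreeReduction.
Variable n : nat.
Implicit Types (a : 'I_n) (x y w : word n).

Fixpoint reduced w : bool :=
  if w is a :: w' then (if w' is b :: _ then a != b else true) && reduced w'
  else true.

Lemma reduced_push a w : reduced w -> reduced (push a w).
Proof.
case: w => [|b w] //= /andP[ab rw].
by case: eqP => [_|/eqP nab] //=; rewrite nab ab rw.
Qed.

Lemma reduced_red w : reduced (red w).
Proof. by elim: w => [|a w IHw] //=; apply: reduced_push. Qed.

Lemma pushK a w : reduced w -> push a (push a w) = w.
Proof.
case: w => [|b w] /=; first by rewrite eqxx.
case: eqP => [<-|_] /=; last by rewrite eqxx.
by case: w => [|c w] //= /andP[/negbTE -> _].
Qed.

Lemma red_cat x y : red (x ++ y) = foldr (@push n) (red y) x.
Proof. by rewrite /red foldr_cat. Qed.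

Lemma red_rev_cat x y : red (rev x ++ x ++ y) = red y.
Proof.
elim: x y => [|a x IHx] y //=.
rewrite rev_cons -cats1 -catA /= red_cat /= pushK ?reduced_red //.
by rewrite -red_cat IHx.
Qed.

Lemma red_cancel x y w : red (x ++ rev w ++ w ++ y) = red (x ++ y).
Proof. by rewrite [LHS]red_cat red_rev_cat -red_cat. Qed.

End FreeReduction.

Section Subgroup.
Variables (n : nat) (A : pred (word n)).
Implicit Types (x y w : word n).

Definition subgroupZ : Prop :=
  [/\ memZ A [::],
      (forall x y, memZ A x -> memZ A y -> memZ A (x ++ y)) &
      (forall x, memZ A x -> memZ A (rev x))].

Lemma normal_subgroupW : normal_subgroup A -> subgroupZ.
Proof. by case. Qed.

Lemma eq_memZ x y : red x = red y -> memZ A x = memZ A y.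
Proof. by rewrite /memZ => ->. Qed.

Hypothesis subA : subgroupZ.

Lemma memZ_cat_rev x : memZ A (x ++ rev x).
Proof.
have := red_cancel [::] [::] (rev x); rewrite revK cats0 => /eq_memZ ->.
by case: subA.
Qed.

Lemma memZ_coset x y w :
  memZ A (x ++ rev y) -> memZ A (x ++ rev w) = memZ A (y ++ rev w).
Proof.
case: subA => _ mulA invA xy; apply/idP/idP => Aw.
  have := mulA _ _ (invA _ xy) Aw; rewrite rev_cat revK -!catA.
  by rewrite (eq_memZ (red_cancel _ _ _)).
by have := mulA _ _ xy Aw; rewrite -!catA (eq_memZ (red_cancel _ _ _)).
Qed.

End Subgroup.

Section TupleAction.
Variables (n m : nat).
Implicit Types (s t : {perm 'I_n}) (a : m.-tuple 'I_n).

Lemma tact1 a : tact 1%g a = a.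
Proof. by apply: val_inj; rewrite /= (eq_map (@perm1 _)) map_id. Qed.

Lemma tactM s t a : tact (s * t)%g a = tact t (tact s a).
Proof. by apply: val_inj; rewrite /= -map_comp; apply: eq_map => x; rewrite permM. Qed.

Lemma tactK s : cancel (tact (m:=m) s) (tact s^-1).
Proof. by move=> a; rewrite -tactM mulgV tact1. Qed.

Lemma tactKV s : cancel (tact (m:=m) s^-1) (tact s).
Proof. by move=> a; rewrite -tactM mulVg tact1. Qed.

End TupleAction.

Section Coefficients.
Variables (n : nat) (A : pred (word n)).
Implicit Types (x : CG n) (w : word n).

Lemma cg_coef_nil w : cg_coef A [::] w = 0.
Proof. by rewrite /cg_coef big_nil. Qed.

Lemma cg_coef_cat x y w : cg_coef A (x ++ y) w = cg_coef A x w + cg_coef A y w.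
Proof. by rewrite /cg_coef big_cat. Qed.

Lemma cg_coef_sum xs w : cg_coef A (cg_sum xs) w = \sum_(x <- xs) cg_coef A x w.
Proof.
elim: xs => [|x xs IHxs]; first by rewrite big_nil cg_coef_nil.
by rewrite /= cg_coef_cat IHxs big_cons.
Qed.

Lemma cg_coef_scale c x w : cg_coef A (cg_scale c x) w = c * cg_coef A x w.
Proof. by rewrite /cg_coef big_map mulr_sumr. Qed.

Lemma cg_coef_word (g : word n) w : cg_coef A [:: (1, g)] w = (memZ A (g ++ rev w))%:R.
Proof. by rewrite /cg_coef big_cons big_nil /=; case: memZ; rewrite ?addr0. Qed.

Lemma prod_u_zip (s : {perm 'I_n}) (j i : seq 'I_n) : size j = size i ->
  foldr (fun p acc => cg_mul (u_ p.1 p.2 s) acc) (cg_one n) (zip j i) =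
  if j == map s i then [:: (1, j)] else [::].
Proof.
elim: j i => [|a j IHj] [|b i] //= [/IHj ->].
rewrite /u_ eqseq_cons /=; case: (a == s b) => //=.
by case: (j == map s i); rewrite /cg_mul ?allpairs0r //= mul1r.
Qed.

Lemma utensE k (j i : k.-tuple 'I_n) s :
  utens j i s = if j == tact s i then [:: (1, val j)] else [::].
Proof. by rewrite /utens prod_u_zip ?size_tuple. Qed.

Lemma cg_coef_Tu k l (T : Lin n k l) j i s w :
  cg_coef A (Tu T j i s) w = T (j, tact s i) * (memZ A (val (tact s i) ++ rev w))%:R.
Proof.
rewrite /Tu cg_coef_sum big_map (bigD1_seq (tact s i)) ?mem_enum ?enum_uniq //.
rewrite cg_coef_scale utensE eqxx cg_coef_word big1 /= ?addr0 // => p /negbTE np.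
by rewrite cg_coef_scale utensE np cg_coef_nil mulr0.
Qed.

Lemma cg_coef_uT k l (T : Lin n k l) j i s w :
  cg_coef A (uT T j i s) w = T (tact s^-1 j, i) * (memZ A (val j ++ rev w))%:R.
Proof.
rewrite /uT cg_coef_sum big_map (bigD1_seq (tact s^-1 j)) ?mem_enum ?enum_uniq //.
rewrite cg_coef_scale utensE tactKV eqxx cg_coef_word big1 /= ?addr0 // => q nq.
rewrite cg_coef_scale utensE; case: eqP => [jq|_]; last by rewrite cg_coef_nil mulr0.
by move: nq; rewrite jq tactK eqxx.
Qed.

End Coefficients.

Section Morphisms.
Variables (n : nat) (H : {group {perm 'I_n}}) (A : pred (word n)) (k l : nat).
Implicit Type T : Lin n k l.

Definition supported_on T : Prop :=
  forall j i, ~~ memZ A (val i ++ rev (val j)) -> T (j, i) = 0.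

Definition tact_invariant T : Prop :=
  forall s, s \in H -> forall j i, T (tact s j, tact s i) = T (j, i).

Hypothesis subA : subgroupZ A.

Lemma Mor_supported T : Mor H A T -> supported_on T.
Proof.
move=> morT j i notA; have := morT j i 1%g (group1 H) (val j).
by rewrite cg_coef_Tu cg_coef_uT invg1 !tact1 (negbTE notA) memZ_cat_rev // mulr0 mulr1.
Qed.

Lemma Mor_invariant T : Mor H A T -> tact_invariant T.
Proof.
move=> morT s Hs j i; have := morT (tact s j) i s Hs (val (tact s j)).
rewrite cg_coef_Tu cg_coef_uT tactK memZ_cat_rev // mulr1.
case Aij: memZ; first by rewrite mulr1.
by rewrite mulr0 => <-; rewrite (Mor_supported morT) ?Aij.
Qed.

Lemma supported_invariant_Mor T : supported_on T -> tact_invariant T -> Mor H A T.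
Proof.
move=> suppT invT j i s Hs w; rewrite cg_coef_Tu cg_coef_uT.
have -> : T (j, tact s i) = T (tact s^-1 j, i) by rewrite -{1}(tactKV s j) invT.
have [Aij|notA] := boolP (memZ A (val (tact s i) ++ rev (val j))).
  by rewrite (memZ_coset subA _ Aij).
by rewrite -(invT s Hs) tactKV suppT // !mul0r.
Qed.

Lemma MorP T : Mor H A T <-> supported_on T /\ tact_invariant T.
Proof.
split=> [morT|[]]; last exact: supported_invariant_Mor.
by split; [apply: Mor_supported | apply: Mor_invariant].
Qed.

End Morphisms.

Section FfunFamilies.
Variables (K : fieldType) (I : finType).
Implicit Type X : seq {ffun I -> K^o}.

Lemma span_ffun_eq0 X (x : I) :
  {in X, forall g : {ffun I -> K^o}, g x = 0} ->
  {in <<X>>%VS, forall f : {ffun I -> K^o}, f x = 0}.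
Proof.
move=> X0 f /(@coord_span _ _ _ (in_tuple X)) ->; rewrite sum_ffunE big1 // => b _.
by rewrite ffunE X0 ?scaler0 // mem_nth.
Qed.

Lemma span_ffun_eq X (x y : I) :
  {in X, forall g : {ffun I -> K^o}, g x = g y} ->
  {in <<X>>%VS, forall f : {ffun I -> K^o}, f x = f y}.
Proof.
move=> Xxy f /(@coord_span _ _ _ (in_tuple X)) ->; rewrite !sum_ffunE.
by apply: eq_bigr => b _; rewrite !ffunE Xxy // mem_nth.
Qed.

Lemma free_map_isolated (S : eqType) (s : seq S) (F : S -> {ffun I -> K^o}) :
  uniq s ->
  (forall a, a \in s -> exists x, F a x != 0 /\ {in s, forall b, b != a -> F b x = 0}) ->
  free (map F s).
Proof.
move=> s_uniq isoF; apply/(@freeP _ _ _ (in_tuple (map F s))) => c sum0 b.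
have b_lt : (b < size s)%N by rewrite -(size_map F).
have a0 : S by case: s b {s_uniq isoF c sum0 b_lt} => [[]|a _ _].
have [x [Fbx Fx]] := isoF _ (mem_nth a0 b_lt).
have := congr1 (fun f : {ffun I -> K^o} => f x) sum0.
rewrite sum_ffunE ffunE (bigD1 b) //= big1 => [|a ab].
  rewrite addr0 ffunE (nth_map a0) //= => /eqP.
  by rewrite mulf_eq0 (negbTE Fbx) orbF => /eqP.
have a_lt : (a < size s)%N by rewrite -(size_map F).
rewrite ffunE (nth_map a0) //= Fx ?scaler0 ?mem_nth //.
by rewrite nth_uniq // -(inj_eq val_inj).
Qed.

End FfunFamilies.

Section Orbits.
Variables (n : nat) (H : {group {perm 'I_n}}) (k l : nat).
Local Notation pair := (k.-tuple 'I_n * l.-tuple 'I_n)%type.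
Implicit Types (p q : pair) (X : {set pair}) (T : Lin n k l).
Implicit Types (i : k.-tuple 'I_n) (j : l.-tuple 'I_n).

Lemma orbitH_refl p : p \in orbitH H p.
Proof. by apply/imsetP; exists 1%g; rewrite ?group1 // !tact1; case: p. Qed.

Lemma orbitH_eq p q : q \in orbitH H p -> orbitH H q = orbitH H p.
Proof.
case/imsetP => s Hs -> /=; apply/setP => z; apply/imsetP/imsetP.
  by case=> t Ht ->; exists (s * t)%g; rewrite ?groupM //= !tactM.
case=> t Ht ->; exists (s^-1 * t)%g; rewrite ?groupM ?groupV //=.
by rewrite -!tactM mulKVg.
Qed.

Lemma orbitH_in_W p : orbitH H p \in W H k l.
Proof. by apply/imsetP; exists p; rewrite ?inE. Qed.

Lemma pick_W X : X \in W H k l -> exists2 q, [pick p in X] = Some q & X = orbitH H q.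
Proof.
case/imsetP => p _ ->; case: pickP => [q pq|/(_ p)]; last by rewrite orbitH_refl.
by exists q; rewrite // (orbitH_eq pq).
Qed.

Lemma invariant_orbitH T p i j :
  tact_invariant H T -> (i, j) \in orbitH H p -> T (j, i) = T (p.2, p.1).
Proof. by move=> invT /imsetP[s Hs [-> ->]]; apply: invT. Qed.

Lemma That_eq0 p j i : (That H p (j, i) == 0) = ((i, j) \notin orbitH H p).
Proof.
rewrite ffunE pnatr_eq0 cards_eq0; apply/eqP/negP => [S0 /imsetP[s Hs [ei ej]]|no_s].
  by have /setP/(_ s) := S0; rewrite !inE Hs -ei -ej !eqxx.
apply/setP => s; rewrite !inE; apply/negP => /and3P[Hs /eqP ei /eqP ej].
by apply: no_s; apply/imsetP; exists s; rewrite ?ei ?ej.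
Qed.

Lemma That_invariant p : tact_invariant H (That H p).
Proof.
move=> t Ht j i; rewrite !ffunE; congr (_%:R).
rewrite -[RHS](card_imset _ (mulIg t)); apply: eq_card => s; rewrite inE.
apply/and3P/imsetP => [[Hs /eqP ej /eqP ei]|[r /[!inE] /and3P[Hr /eqP ej /eqP ei] ->]].
  exists (s * t^-1)%g; last by rewrite mulgKV.
  by rewrite inE groupM ?groupV // !tactM ej ei !tactK !eqxx.
by rewrite groupM // !tactM ej ei !eqxx.
Qed.

Lemma ThatW_eq0 X i j : X \in W H k l -> X != orbitH H (i, j) -> ThatW H X (j, i) = 0.
Proof.
case/pick_W => q pq Xq nXij; rewrite /ThatW pq; apply/eqP; rewrite That_eq0.
by move: nXij; apply: contra => /orbitH_eq ->; rewrite Xq.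
Qed.

Lemma ThatW_orbitH_neq0 i j : ThatW H (orbitH H (i, j)) (j, i) != 0.
Proof.
have [q pq ijq] := pick_W (orbitH_in_W (i, j)).
by rewrite /ThatW pq That_eq0 negbK -ijq orbitH_refl.
Qed.

Lemma ThatW_invariant X : tact_invariant H (ThatW H X).
Proof.
rewrite /ThatW; case: pickP => [p _|_]; first exact: That_invariant.
by move=> s _ j i; rewrite !ffunE.
Qed.

Lemma free_ThatW : free [seq ThatW H X | X <- enum (W H k l)].
Proof.
apply: free_map_isolated; first exact: enum_uniq.
move=> X; rewrite mem_enum => /pick_W[[a b] _ ->].
exists (b, a); split=> [|Y]; first exact: ThatW_orbitH_neq0.
by rewrite mem_enum => WY; apply: ThatW_eq0.
Qed.

Definition class_coef T X : Cplx :=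
  if [pick p in X] is Some p then T (p.2, p.1) / That H p (p.2, p.1) else 0.

Lemma invariant_decomposition T :
  tact_invariant H T -> T = \sum_(X <- enum (W H k l)) class_coef T X *: ThatW H X.
Proof.
move=> invT; apply/ffunP => -[j i]; rewrite sum_ffunE.
rewrite (bigD1_seq (orbitH H (i, j))) ?mem_enum ?orbitH_in_W ?enum_uniq //.
rewrite big1_seq /= ?addr0 => [|X /andP[nX]]; last first.
  by rewrite mem_enum ffunE => WX; rewrite ThatW_eq0 ?scaler0.
have [q pq ijq] := pick_W (orbitH_in_W (i, j)).
have {}ijq : (i, j) \in orbitH H q by rewrite -ijq orbitH_refl.
rewrite ffunE /class_coef /ThatW pq (invariant_orbitH invT ijq).
rewrite (invariant_orbitH (That_invariant q) ijq).
rewrite -[_ *: _]/(_ * _) divfK //.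
by rewrite That_eq0 negbK -surjective_pairing orbitH_refl.
Qed.

End Orbits.

Section Classes.
Variables (n : nat) (H : {group {perm 'I_n}}) (A : pred (word n)) (k l : nat).
Local Notation pair := (k.-tuple 'I_n * l.-tuple 'I_n)%type.
Implicit Types (p : pair) (X : {set pair}) (T : Lin n k l).
Implicit Types (i : k.-tuple 'I_n) (j : l.-tuple 'I_n).
Hypothesis invA : H_invariant H A.

Lemma memZ_orbitH p i j : (i, j) \in orbitH H p ->
  memZ A (val i ++ rev (val j)) = memZ A (val p.1 ++ rev (val p.2)).
Proof.
case/imsetP => s Hs [-> ->]; rewrite -(invA Hs (val p.1 ++ rev (val p.2))).
by rewrite /Defs.act map_cat map_rev.
Qed.

Lemma ThatW_supported X : X \in W H k l -> classInA A X -> supported_on A (ThatW H X).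
Proof.
case/pick_W => q pq _; rewrite /classInA /ThatW pq => Aq j i notA.
apply/eqP; rewrite That_eq0; apply: contra notA => /memZ_orbitH ->.
by rewrite Aq.
Qed.

Lemma class_coef_eq0 T X :
  supported_on A T -> X \in W H k l -> ~~ classInA A X -> class_coef H T X = 0.
Proof.
move=> suppT /pick_W[q pq _]; rewrite /classInA /class_coef pq => notA.
by rewrite suppT ?mul0r.
Qed.

Lemma span_ThatW_classInA T :
  T \in <<[seq ThatW H X | X <- enum (W H k l) & classInA A X]>>%VS <->
  supported_on A T /\ tact_invariant H T.
Proof.
set gens := [seq _ | _ <- _]; have gensP g : g \in gens ->
    exists2 X, X \in W H k l & classInA A X /\ g = ThatW H X.
  by case/mapP => X; rewrite mem_filter mem_enum => /andP[AX WX] ->; exists X.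
split=> [spanT|[suppT invT]].
  split=> [j i notA|s Hs j i].
    apply: (span_ffun_eq0 _ spanT) => _ /gensP[X WX [AX ->]].
    exact: ThatW_supported.
  apply: (span_ffun_eq _ spanT) => _ /gensP[X WX [_ ->]].
  exact: ThatW_invariant.
rewrite (invariant_decomposition invT) -(@big_rmcond_in _ _ _ _ _ (fun X : {set pair} => classInA A X)).
  rewrite -big_filter big_seq; apply: memv_suml => X gensX.
  by apply/memvZ/memv_span; rewrite map_f.
by move=> X /[!mem_enum] WX notA; rewrite class_coef_eq0 ?scale0r.
Qed.

End Classes.

Theorem theorem5p11 (n : nat) (H : {group {perm 'I_n}}) (A : pred (word n)) :
  normal_subgroup A -> H_invariant H A ->
  forall k l : nat,
    (forall T : Lin n k l,
        Mor H A T <->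
        T \in <<[seq ThatW H X | X <- enum (W H k l) & classInA A X]>>%VS)
    /\ free [seq ThatW H X | X <- enum (W H k l)].
Proof.
move=> /normal_subgroupW subA invA k l; split=> [T|]; last exact: free_ThatW.
exact: iff_trans (MorP H subA T) (iff_sym (span_ThatW_classInA invA T)).
Qed.
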